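(* Let $s\geq 2$ and let $n_1>n_2>\cdots>n_s\geq 2$ be integers, and $S=\{n_1,\ldots,n_s\}$. Let $\delta_3(S)$ denote the minimum number of vertices of a $3$-uniform bi-hypergraph $\mathcal H=(X,\mathcal B)$ which is a one-realization of $S$. Then $\delta_3(S)\geq 2n_1-\left\lfloor \frac{n_2+1}{n_1}\right\rfloor$.
   Context: A bi-hypergraph is a pair $\mathcal H=(X,\mathcal B)$ with $X$ finite and $\mathcal B$ a family of subsets of $X$ (each member serving simultaneously as a $\mathcal C$-edge and a $\mathcal D$-edge); it is $3$-uniform if every member of $\mathcal B$ has exactly $3$ elements. A strict $k$-coloring is a partition of $X$ into exactly $k$ nonempty classes such that every edge of $\mathcal B$ contains two vertices of a common class and two vertices of distinct classes. The feasible set $\Phi(\mathcal H)$ is the set of $k$ admitting a strict $k$-coloring. The chromatic spectrum is $(r_1,\ldots,r_{\bar\chi})$ with $r_k$ the number of strict $k$-colorings (as partitions) and $\bar\chi=\max\Phi(\mathcal H)$. $\mathcal H$ is a one-realization of $S$ if $\Phi(\mathcal H)=S$ and each $r_k\in\{0,1\}$. *)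

From mathcomp Require Import all_boot.
Set Implicit Arguments. Unset Strict Implicit. Unset Printing Implicit Defensive.

(* A bi-hypergraph (X, B) with X = the finite type T and B : {set {set T}}. *)

Section BiHypergraph.
Variable T : finType.

Definition three_uniform (B : {set {set T}}) : Prop :=
  forall e, e \in B -> #|e| = 3.

Definition strict_coloring (B : {set {set T}}) (k : nat) (P : {set {set T}}) : bool :=
  [&& partition P [set: T], #|P| == k &
   [forall e in B,
     [exists x in e, exists y in e, (x != y) && (pblock P x == pblock P y)] &&
     [exists x in e, exists y in e, pblock P x != pblock P y]]].

Definition num_strict (B : {set {set T}}) (k : nat) : nat :=
  #|[set P : {set {set T}} | strict_coloring B k P]|.

Definition feasible (B : {set {set T}}) (k : nat) : bool := 0 < num_strict B k.

Definition one_realization (B : {set {set T}}) (S : pred nat) : Prop :=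
  (forall k, feasible B k = S k) /\ (forall k, num_strict B k <= 1).

End BiHypergraph.

From mathcomp Require Import all_boot zify.
Set Implicit Arguments. Unset Strict Implicit. Unset Printing Implicit Defensive.

(* Let P be the unique strict n1-colouring.  Two singleton classes can always be
   merged, since no 3-edge fits inside their union; so three singleton classes
   would give two different strict (n1-1)-colourings, and two of them make n1-1
   feasible, which forces n2 = n1-1.  If P has a singleton class {a} but no class
   of size at least 3, then splitting every 2-element class and putting a on
   either side gives two different strict 2-colourings.  Hence a singleton class
   is paid for by a class of size at least 3, and counting vertices class by
   class gives |X| >= 2 n1, or |X| >= 2 n1 - 1 when n2 = n1 - 1. *)

Lemma card_sep_sum (aT : finType) (A : {set aT}) (p : pred aT) :
  #|[set x in A | p x]| = \sum_(x in A) p x.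
Proof.
rewrite -sum1dep_card big_mkcondr /=.
by apply: eq_bigr => x _; case: (p x).
Qed.

Section StrictMaps.
Variables (T : finType) (B : {set {set T}}).

Definition strict_map (rT : finType) (f : T -> rT) : Prop :=
  forall e, e \in B ->
    (exists x y, [/\ x \in e, y \in e, x != y & f x = f y]) /\
    (exists x y, [/\ x \in e, y \in e & f x != f y]).

Lemma pblock_preim_partition (rT : finType) (f : T -> rT) x y :
  (pblock (preim_partition f [set: T]) x == pblock (preim_partition f [set: T]) y)
  = (f x == f y).
Proof.
have /and3P[/eqP covP tiP _] := preim_partitionP f [set: T].
rewrite eq_pblock ?covP ?inE // pblock_equivalence_partition ?inE //.
by move=> u v w _ _ _; split=> // /eqP ->.
Qed.

Lemma card_preim_partition (rT : finType) (f : T -> rT) :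
  #|preim_partition f [set: T]| = #|f @: [set: T]|.
Proof.
pose fiber v := [set y | f y == v].
have -> : preim_partition f [set: T] = fiber @: (f @: [set: T]).
  rewrite -imset_comp; apply: eq_imset => x; apply/setP => y.
  by rewrite !inE eq_sym.
rewrite card_in_imset // => _ v /imsetP[x _ ->] _ /setP /(_ x).
by rewrite !inE eqxx => /esym /eqP.
Qed.

Lemma strict_coloring_preim (rT : finType) (f : T -> rT) :
  strict_map f -> strict_coloring B #|f @: [set: T]| (preim_partition f [set: T]).
Proof.
move=> fB; rewrite /strict_coloring preim_partitionP card_preim_partition eqxx /=.
apply/forall_inP => e /fB [[x [y [xe ye xy fxy]]] [u [v [ue ve fuv]]]].
apply/andP; split; apply/exists_inP.
  exists x; first exact: xe.
  by apply/exists_inP; exists y; rewrite ?pblock_preim_partition ?xy ?fxy ?eqxx.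
exists u; first exact: ue.
by apply/exists_inP; exists v; rewrite ?pblock_preim_partition.
Qed.

Lemma strict_coloring_pblock k P : strict_coloring B k P -> strict_map (pblock P).
Proof.
case/and3P=> _ _ /forall_inP PB e /PB /andP[/exists_inP[x xe] /exists_inP[y ye]].
case/andP=> xy /eqP Pxy /exists_inP[u ue /exists_inP[v ve Puv]].
by split; [exists x, y | exists u, v].
Qed.

Lemma strict_feasible k P : strict_coloring B k P -> feasible B k.
Proof. by move=> PB; apply/card_gt0P; exists P; rewrite inE. Qed.

Lemma strict_coloring_uniq k P Q : num_strict B k <= 1 ->
  strict_coloring B k P -> strict_coloring B k Q -> P = Q.
Proof. by move=> /card_le1_eqP uniqB PB QB; apply: uniqB; rewrite inE. Qed.

Lemma preim_partition_eq (rT rT' : finType) (f : T -> rT) (g : T -> rT') x y :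
  preim_partition f [set: T] = preim_partition g [set: T] ->
  (f x == f y) = (g x == g y).
Proof. by move=> fg; rewrite -(pblock_preim_partition f) -(pblock_preim_partition g) fg. Qed.

Section Merge.
Variables (rT : finType) (f : T -> rT) (u v : rT).

Definition merge_colors x := if f x == v then u else f x.

Lemma card_merge_colors_image :
  u \in f @: [set: T] -> v \in f @: [set: T] -> u != v ->
  #|merge_colors @: [set: T]| = #|f @: [set: T]|.-1.
Proof.
move=> fu fv uv; rewrite [in RHS](cardsD1 v) fv.
suff -> : merge_colors @: [set: T] = f @: [set: T] :\ v by [].
apply/setP => w.
rewrite !inE; apply/imsetP/andP => [[x _ ->]|[wv /imsetP[x _ fxw]]].
  rewrite /merge_colors; have [_|fxv] := eqVneq (f x) v; first by rewrite uv fu.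
  by rewrite fxv imset_f.
by exists x; rewrite // /merge_colors -fxw (negbTE wv).
Qed.

Lemma strict_map_merge_colors : strict_map f ->
  (forall e, e \in B -> exists2 z, z \in e & (f z != u) && (f z != v)) ->
  strict_map merge_colors.
Proof.
move=> fB Bz e eB; have [[x [y [xe ye xy fxy]]] [x' [y' [xe' ye' fxy']]]] := fB e eB.
split; first by exists x, y; rewrite /merge_colors fxy.
have [mxy|] := eqVneq (merge_colors x') (merge_colors y'); last by exists x', y'.
have [z ze /andP[zu zv]] := Bz e eB.
have mx' : merge_colors x' = u.
  move: mxy fxy'; rewrite /merge_colors.
  by case: eqP => [//|_]; case: eqP => [-> ->|_ ->]; rewrite ?eqxx.
exists z, x'; split=> //; rewrite mx' /merge_colors (negbTE zv) //.
Qed.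

End Merge.

Section Halving.
Variables (rT : finType) (f : T -> rT) (a r s : T).
Hypotheses (B3 : three_uniform B) (fB : strict_map f).
Hypotheses (fa : forall y, f y = f a -> y = a)
  (fiber_le2 : forall x, #|[set y | f y == f x]| <= 2)
  (rs : r != s) (frs : f r = f s).

(* The default [a] is never returned: the fibre of [x] contains [x]. *)
Definition rep x := odflt a [pick y | f y == f x].

Lemma f_rep x : f (rep x) = f x.
Proof. by rewrite /rep; case: pickP => [y /eqP //|/(_ x)]; rewrite eqxx. Qed.

Definition halve (b : bool) x := if x == a then b else x == rep x.

Lemma halve_pair b x y : x != y -> f x = f y -> halve b x != halve b y.
Proof.
move=> xy fxy.
have xa : x != a by apply: contraNneq xy => xa; subst x; rewrite (fa (esym fxy)).
have ya : y != a by apply: contraNneq xy => ya; subst y; rewrite (fa fxy).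
have rep_xy : (rep x == x) || (rep x == y).
  apply: contraLR (fiber_le2 x); rewrite negb_or -ltnNge => /andP[rx ry].
  by apply/card_gt2P; exists x, y, (rep x); rewrite !inE f_rep fxy eqxx xy (eq_sym y) ry rx.
rewrite /halve (negbTE xa) (negbTE ya) /rep -fxy -/(rep x).
have yx : y != x by rewrite eq_sym.
by case/orP: rep_xy => /eqP->; rewrite !eqxx ?(negbTE xy) ?(negbTE yx).
Qed.

Lemma strict_map_halve b : strict_map (halve b).
Proof.
move=> e eB; have [[x [y [xe ye xy fxy]]] _] := fB eB.
split; last by exists x, y; split=> //; apply: halve_pair.
have /card_gt2P [x1 [x2 [x3 [[e1 e2 e3] [d12 d23 d31]]]]] : 2 < #|e| by rewrite B3.
have [h12|h12] := eqVneq (halve b x1) (halve b x2); first by exists x1, x2.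
have [h31|h31] := eqVneq (halve b x3) (halve b x1); first by exists x3, x1.
exists x2, x3; split=> //; move: h12 h31.
by case: (halve b x1); case: (halve b x2); case: (halve b x3).
Qed.

Lemma card_halve_image b : #|halve b @: [set: T]| = 2.
Proof.
suff -> : halve b @: [set: T] = [set: bool] by rewrite cardsT card_bool.
apply/setP => c; rewrite inE; apply/imsetP.
have [->|cr] := eqVneq c (halve b r); first by exists r.
exists s => //; move: (halve_pair b rs frs) cr.
by case: c; case: (halve b r); case: (halve b s).
Qed.

Lemma num_strict2_gt1 : 1 < num_strict B 2.
Proof.
rewrite ltnNge; apply/negP => uniq2.
have col b : strict_coloring B 2 (preim_partition (halve b) [set: T]).
  by rewrite -(card_halve_image b); apply/strict_coloring_preim/strict_map_halve.
have ra : r != a by apply: contraNneq rs => ra; subst r; rewrite (fa (esym frs)).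
have := preim_partition_eq r a (strict_coloring_uniq uniq2 (col true) (col false)).
by rewrite /halve eqxx (negbTE ra); case: (r == rep r).
Qed.

End Halving.
End StrictMaps.

Lemma partition_card_lower (T : finType) (P : {set {set T}}) (D : {set T}) :
  partition P D ->
  2 * #|P| + #|[set C in P | 2 < #|C|]| <= #|D| + #|[set C in P | #|C| == 1]|.
Proof.
move=> partP; have /and3P[_ _ P0] := partP.
rewrite (card_partition partP) !card_sep_sum mulnC -sum_nat_const -!big_split /=.
apply: leq_sum => C PC; have : 0 < #|C| by rewrite card_gt0; apply: contraNneq P0 => <-.
by case: (leqP #|C| 2); case: (#|C| =P 1); lia.
Qed.

Lemma sorted_gt_leq_head (x y : nat) s :
  sorted (fun a b => b < a) (x :: s) -> y \in x :: s -> y <= x.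
Proof.
move=> /(order_path_min (fun _ _ _ yx zy => ltn_trans zy yx)) /allP gt_x.
by rewrite inE => /predU1P[->|/gt_x /ltnW].
Qed.

Section OneRealization.
Variables (T : finType) (B : {set {set T}}) (P : {set {set T}}).
Hypotheses (B3 : three_uniform B) (PB : strict_coloring B #|P| P).
Hypothesis uniqB : forall k, num_strict B k <= 1.

Let partP : partition P [set: T]. Proof. by case/and3P: PB. Qed.

Lemma mem_pblock_self x : x \in pblock P x.
Proof. by have /and3P[/eqP covP _ _] := partP; rewrite mem_pblock covP inE. Qed.

Lemma pblock_mem_self x : pblock P x \in P.
Proof. by have /and3P[/eqP covP _ _] := partP; rewrite pblock_mem ?covP. Qed.

Lemma card_class_gt0 C : C \in P -> 0 < #|C|.
Proof.
by have /and3P[_ _ P0] := partP => PC; rewrite card_gt0; apply: contraNneq P0 => <-.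
Qed.

Lemma pblock_eq_class C x : C \in P -> (pblock P x == C) = (x \in C).
Proof.
have /and3P[_ tiP _] := partP.
by move=> PC; apply/eqP/idP => [<-|xC]; [exact: mem_pblock_self | exact: def_pblock].
Qed.

Lemma pblock_class C x : C \in P -> x \in C -> pblock P x = C.
Proof. by move=> PC xC; apply/eqP; rewrite pblock_eq_class. Qed.

Lemma imset_pblock : pblock P @: [set: T] = P.
Proof.
apply/setP => C; apply/imsetP/idP => [[x _ ->]|PC]; first exact: pblock_mem_self.
have /card_gt0P[x xC] := card_class_gt0 PC.
by exists x; rewrite ?(pblock_class PC xC).
Qed.

Definition singleton_classes := [set C in P | #|C| == 1].

Lemma merge_singletons_strict A C :
  A \in singleton_classes -> C \in singleton_classes -> A != C ->
  strict_coloring B #|P|.-1 (preim_partition (merge_colors (pblock P) A C) [set: T]).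
Proof.
rewrite !inE => /andP[PA /eqP A1] /andP[PC /eqP C1] AC.
rewrite -{1}imset_pblock -(card_merge_colors_image (u := A) (v := C)) ?imset_pblock //.
apply/strict_coloring_preim/strict_map_merge_colors; first exact: strict_coloring_pblock PB.
move=> e eB; have /subsetPn[z ze zAC] : ~~ (e \subset A :|: C).
  apply/negP => /subset_leq_card; rewrite B3 //.
  by rewrite cardsU A1 C1; lia.
by exists z => //; move: zAC; rewrite !pblock_eq_class // inE negb_or.
Qed.

Lemma singleton_classesP C :
  reflect (C \in P /\ exists x, C = [set x]) (C \in singleton_classes).
Proof. by rewrite inE; apply: (iffP andP) => -[PC /cards1P]. Qed.

Lemma card_singleton_classes_le2 : #|singleton_classes| <= 2.
Proof.
rewrite leqNgt; apply/card_gt2P => -[A [C1 [C2 [[SA S1 S2] [AC1 C12 C2A]]]]].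
have AC2 : A != C2 by rewrite eq_sym.
have uniq_merge := strict_coloring_uniq (uniqB _)
  (merge_singletons_strict SA S1 AC1) (merge_singletons_strict SA S2 AC2).
have [[PA [a defA]] [P1 [b defC1]]] := (singleton_classesP _ SA, singleton_classesP _ S1).
have pa : pblock P a = A by rewrite (pblock_class PA) // defA set11.
have pb : pblock P b = C1 by rewrite (pblock_class P1) // defC1 set11.
have := preim_partition_eq a b uniq_merge.
by rewrite /merge_colors pa pb (negbTE AC1) (negbTE C12) (negbTE AC2) !eqxx (negbTE AC1).
Qed.

Lemma singleton_classes_feasible : 1 < #|singleton_classes| -> feasible B #|P|.-1.
Proof.
move=> /card_gt1P[A [C [SA SC AC]]].
exact: strict_feasible (merge_singletons_strict SA SC AC).
Qed.

Lemma big_class_exists : 2 < #|P| -> 0 < #|singleton_classes| ->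
  0 < #|[set C in P | 2 < #|C|]|.
Proof.
move=> P3 /card_gt0P[A /singleton_classesP[PA [a defA]]].
rewrite card_gt0; apply/negP => /eqP /setP no_big.
have le2 C : C \in P -> #|C| <= 2.
  by move=> PC; have := no_big C; rewrite !inE PC /= => /negbT; rewrite -leqNgt.
have [D /setDP[PD notSD]] : exists D, D \in P :\: singleton_classes.
  apply/set0Pn; rewrite -card_gt0 cardsD.
  have := leq_trans (subset_leq_card (subsetIr P _)) card_singleton_classes_le2; lia.
have /card_gt1P[r [s [rD sD rs]]] : 1 < #|D|.
  have := card_class_gt0 PD.
  have : #|D| != 1 by apply: contraNneq notSD => D1; rewrite inE PD D1.
  by have := le2 D PD; lia.
have pa : pblock P a = A by rewrite (pblock_class PA) // defA set11.
have fa y : pblock P y = pblock P a -> y = a.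
  by move=> ya; apply/set1P; rewrite -defA -pa -ya mem_pblock_self.
have fiber_le2 x : #|[set y | pblock P y == pblock P x]| <= 2.
  have -> : [set y | pblock P y == pblock P x] = pblock P x.
    by apply/setP => y; rewrite inE pblock_eq_class // pblock_mem_self.
  exact/le2/pblock_mem_self.
have frs : pblock P r = pblock P s by rewrite !(pblock_class PD).
have := num_strict2_gt1 B3 (strict_coloring_pblock PB) fa fiber_le2 rs frs.
by rewrite ltnNge uniqB.
Qed.

Lemma card_vertices_lower : 2 < #|P| -> 2 * #|P| <= #|T| + feasible B #|P|.-1.
Proof.
move=> P3; have := partition_card_lower partP; rewrite cardsT -/singleton_classes.
have S_le2 := card_singleton_classes_le2.
have [->|S_gt0] := posnP #|singleton_classes|; first lia.
have big_gt0 := big_class_exists P3 S_gt0.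
have [S_le1|/singleton_classes_feasible ->] := leqP #|singleton_classes| 1; lia.
Qed.

End OneRealization.

Theorem lemma2p1 (ns : seq nat) (T : finType) (B : {set {set T}}) :
  2 <= size ns ->
  sorted (fun a b => b < a) ns ->
  all (fun a => 2 <= a) ns ->
  three_uniform B ->
  one_realization B (fun k => k \in ns) ->
  2 * nth 0 ns 0 - (nth 0 ns 1 + 1) %/ nth 0 ns 0 <= #|T|.
Proof.
move=> size_ns sorted_ns ge2_ns B3 [feasB uniqB].
case: ns size_ns sorted_ns ge2_ns feasB => [|n1 [|n2 ns]] //= _ /andP[n21 path_ns].
case/and3P=> _ n2_ge2 _ feasB.
have := feasB n1; rewrite inE eqxx => /card_gt0P[P]; rewrite inE => PB.
have cardP : #|P| = n1 by case/and3P: PB => _ /eqP.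
have n1_gt2 : 2 < n1 by lia.
rewrite -cardP in PB; have := card_vertices_lower B3 PB uniqB; rewrite cardP => /(_ n1_gt2).
case: (boolP (feasible B n1.-1)) => [n1_feas|_] /=; last first.
  by rewrite addn0 => /(leq_trans (leq_subr _ _)).
have : n1.-1 \in n2 :: ns.
  by move: n1_feas; rewrite feasB inE => /predU1P[?|//]; exfalso; lia.
move/(sorted_gt_leq_head path_ns) => n1_le.
have -> : n2 + 1 = n1 by lia.
by rewrite divnn; lia.
Qed.
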